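(* For all $\mathbf u\in D(\tilde{\mathbf L})$ we have $\operatorname{Re}(\tilde{\mathbf L}\mathbf u,\mathbf u)_{\tilde{\mathcal H}}\le0$.
   Context: Radial functions on $\mathbb B^6_1=\{x\in\mathbb R^6:|x|<1\}$ are identified with their profiles in $\rho=|x|$, and $'$ denotes $\partial_\rho$. $D(\tilde{\mathbf L})=\{\mathbf u=(u_1,u_2)\in C^3(\overline{\mathbb B^6_1})\times C^2(\overline{\mathbb B^6_1}): u_1,u_2\text{ radial}\}$ and \[\tilde{\mathbf L}\mathbf u(\rho)=\begin{pmatrix}-\rho u_1'(\rho)-u_1(\rho)+u_2(\rho)\\ u_1''(\rho)+\frac5\rho u_1'(\rho)-\rho u_2'(\rho)-2u_2(\rho)\end{pmatrix}.\] On $D(\tilde{\mathbf L})$, \[(\mathbf u,\mathbf v)_{\tilde{\mathcal H}}=2\int_0^1u_1''\overline{v_1''}\rho^5d\rho+10\int_0^1u_1'\overline{v_1'}\rho^3d\rho+2\int_0^1u_2'\overline{v_2'}\rho^5d\rho+u_1(1)\overline{v_1(1)}+u_2(1)\overline{v_2(1)}.\] *)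

From Stdlib Require Import Reals.
From Coquelicot Require Import Coquelicot.
Open Scope R_scope.

Definition CDn (n : nat) (f : R -> C) (x : R) : C :=
  (Derive_n (fun t => Re (f t)) n x, Derive_n (fun t => Im (f t)) n x).

Definition RCk (k : nat) (g : R -> R) : Prop :=
  (forall j, (j < k)%nat -> forall x, ex_derive (Derive_n g j) x) /\
  (forall j, (j <= k)%nat -> forall x, continuous (Derive_n g j) x).

Definition CCk (k : nat) (f : R -> C) : Prop :=
  RCk k (fun t => Re (f t)) /\ RCk k (fun t => Im (f t)).

(* Profile (in rho = |x|) of a radial C^k function on R^6: an even C^k
   function of one real variable. *)
Definition radial_Ck_profile (k : nat) (f : R -> C) : Prop :=
  CCk k f /\ (forall r, f (- r) = f r).

Definition CInt (f : R -> C) (a b : R) : C :=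
  (RInt (fun t => Re (f t)) a b, RInt (fun t => Im (f t)) a b).

Definition Lt1 (u1 u2 : R -> C) : R -> C := fun rho =>
  Cplus (Cplus (Copp (Cmult (RtoC rho) (CDn 1 u1 rho))) (Copp (u1 rho))) (u2 rho).

Definition Lt2 (u1 u2 : R -> C) : R -> C := fun rho =>
  Cplus (Cplus (Cplus (CDn 2 u1 rho) (Cmult (RtoC (5 / rho)) (CDn 1 u1 rho)))
               (Copp (Cmult (RtoC rho) (CDn 1 u2 rho))))
        (Copp (Cmult (RtoC 2) (u2 rho))).

Definition ipH (u1 u2 v1 v2 : R -> C) : C :=
  Cplus (Cplus (Cplus (Cplus
    (Cmult (RtoC 2) (CInt (fun rho =>
       Cmult (Cmult (CDn 2 u1 rho) (Cconj (CDn 2 v1 rho))) (RtoC (rho ^ 5))) 0 1))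
    (Cmult (RtoC 10) (CInt (fun rho =>
       Cmult (Cmult (CDn 1 u1 rho) (Cconj (CDn 1 v1 rho))) (RtoC (rho ^ 3))) 0 1)))
    (Cmult (RtoC 2) (CInt (fun rho =>
       Cmult (Cmult (CDn 1 u2 rho) (Cconj (CDn 1 v2 rho))) (RtoC (rho ^ 5))) 0 1)))
    (Cmult (u1 1) (Cconj (v1 1))))
    (Cmult (u2 1) (Cconj (v2 1))).

From Stdlib Require Import Reals Lra Lia FunctionalExtensionality.
From Coquelicot Require Import Coquelicot.
Open Scope R_scope.

(* Since L has real coefficients, Re (Lu, u) is the sum of the real forms
   Q(p, r) = (L(p, r), (p, r)) of the real and of the imaginary parts of u.  After
   substituting L, the three weighted integrals of Q add up to the integral over [0, 1]
   of G' with G = - t^6 p''^2 - 5 t^4 p'^2 + 2 t^5 p'' r' - t^6 r'^2, and the weights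
   make G vanish at 0.  So Q is G(1) plus the point terms at 1: a quadratic form in
   p(1), p'(1), p''(1), r(1), r'(1), negative semidefinite by a sum of squares. *)

Lemma RCk_ex_derive (k j : nat) (g : R -> R) (x : R) :
  RCk k g -> (j < k)%nat -> ex_derive (Derive_n g j) x.
Proof. intros [Hd _] Hj; exact (Hd j Hj x). Qed.

Lemma RCk_continuous (k j : nat) (g : R -> R) (x : R) :
  RCk k g -> (j <= k)%nat -> continuous (Derive_n g j) x.
Proof. intros [_ Hc] Hj; exact (Hc j Hj x). Qed.

Lemma continuous_pow_id (n : nat) (x : R) : continuous (fun t => t ^ n) x.
Proof.
  apply (ex_derive_continuous (K := R_AbsRing) (V := R_NormedModule)).
  auto_derive; exact I.
Qed.

Lemma RInt_ext_continuous (f g : R -> R) (a b : R) :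
  (forall t, Rmin a b < t < Rmax a b -> f t = g t) ->
  (forall t, Rmin a b <= t <= Rmax a b -> continuous g t) ->
  ex_RInt f a b /\ RInt f a b = RInt g a b.
Proof.
  intros Hfg Hg.
  split.
  - apply (ex_RInt_ext g); [intros t Ht; symmetry; exact (Hfg t Ht)|].
    exact (ex_RInt_continuous g a b Hg).
  - exact (RInt_ext f g a b Hfg).
Qed.

Ltac solve_RCk :=
  match goal with
  | H : RCk _ ?g |- ex_derive _ _ =>
      first [ apply (RCk_ex_derive _ 0 g _ H) | apply (RCk_ex_derive _ 1 g _ H)
            | apply (RCk_ex_derive _ 2 g _ H) ]; lia
  | H : RCk _ ?g |- continuous (fun t => Derive_n ?g ?j t) _ =>
      apply (RCk_continuous _ j g _ H); lia
  end.

Ltac auto_derive_RCk := auto_derive; [repeat split; first [assumption | solve_RCk] |].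

Ltac solve_continuous :=
  repeat match goal with
  | |- continuous (fun t => @?a t + @?b t) _ => apply (continuous_plus a b)
  | |- continuous (fun t => @?a t - @?b t) _ => apply (continuous_minus a b)
  | |- continuous (fun t => - @?a t) _ => apply (continuous_opp a)
  | |- continuous (fun t => @?a t * @?b t) _ => apply (continuous_mult a b)
  | |- continuous (fun t => t ^ _) _ => apply continuous_pow_id
  | |- continuous (fun t => t) _ => apply continuous_id
  | |- continuous (fun _ => _) _ => apply continuous_const
  | |- continuous (fun t => Derive_n _ _ t) _ => solve_RCk
  end.

Definition Re_fun (f : R -> C) : R -> R := fun t => Re (f t).
Definition Im_fun (f : R -> C) : R -> R := fun t => Im (f t).

Definition Lt1_real (p r : R -> R) (t : R) : R := - (t * Derive_n p 1 t) - p t + r t.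
Definition Lt2_real (p r : R -> R) (t : R) : R :=
  Derive_n p 2 t + 5 / t * Derive_n p 1 t - t * Derive_n r 1 t - 2 * r t.

Definition weighted_integrand (k m : nat) (f g : R -> R) (t : R) : R :=
  Derive_n f k t * Derive_n g k t * t ^ m.
Definition weighted_dot (k m : nat) (f g : R -> R) : R :=
  RInt (weighted_integrand k m f g) 0 1.
Definition ex_weighted_dot (k m : nat) (f g : R -> R) : Prop :=
  ex_RInt (weighted_integrand k m f g) 0 1.

Definition ipH_real (f1 f2 g1 g2 : R -> R) : R :=
  2 * weighted_dot 2 5 f1 g1 + 10 * weighted_dot 1 3 f1 g1 + 2 * weighted_dot 1 5 f2 g2
  + f1 1 * g1 1 + f2 1 * g2 1.
Definition ex_ipH_real (f1 f2 g1 g2 : R -> R) : Prop :=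
  ex_weighted_dot 2 5 f1 g1 /\ ex_weighted_dot 1 3 f1 g1 /\ ex_weighted_dot 1 5 f2 g2.

Lemma Re_Lt1 (u1 u2 : R -> C) : Re_fun (Lt1 u1 u2) = Lt1_real (Re_fun u1) (Re_fun u2).
Proof.
  apply functional_extensionality; intro t.
  unfold Re_fun, Lt1, Lt1_real, CDn, Cplus, Copp, Cmult, RtoC, Re, Im; simpl; ring.
Qed.

Lemma Im_Lt1 (u1 u2 : R -> C) : Im_fun (Lt1 u1 u2) = Lt1_real (Im_fun u1) (Im_fun u2).
Proof.
  apply functional_extensionality; intro t.
  unfold Im_fun, Lt1, Lt1_real, CDn, Cplus, Copp, Cmult, RtoC, Re, Im; simpl; ring.
Qed.

Lemma Re_Lt2 (u1 u2 : R -> C) : Re_fun (Lt2 u1 u2) = Lt2_real (Re_fun u1) (Re_fun u2).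
Proof.
  apply functional_extensionality; intro t.
  unfold Re_fun, Lt2, Lt2_real, CDn, Cplus, Copp, Cmult, RtoC, Re, Im; simpl; ring.
Qed.

Lemma Im_Lt2 (u1 u2 : R -> C) : Im_fun (Lt2 u1 u2) = Lt2_real (Im_fun u1) (Im_fun u2).
Proof.
  apply functional_extensionality; intro t.
  unfold Im_fun, Lt2, Lt2_real, CDn, Cplus, Copp, Cmult, RtoC, Re, Im; simpl; ring.
Qed.

Lemma Re_CInt_weighted (k m : nat) (u v : R -> C) :
  ex_weighted_dot k m (Re_fun u) (Re_fun v) -> ex_weighted_dot k m (Im_fun u) (Im_fun v) ->
  Re (CInt (fun t => Cmult (Cmult (CDn k u t) (Cconj (CDn k v t))) (RtoC (t ^ m))) 0 1)
  = weighted_dot k m (Re_fun u) (Re_fun v) + weighted_dot k m (Im_fun u) (Im_fun v).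
Proof.
  intros Hre Him.
  pose proof (RInt_plus _ _ _ _ Hre Him) as Hsum; unfold plus in Hsum; simpl in Hsum.
  unfold weighted_dot; rewrite <- Hsum.
  apply RInt_ext; intros t _.
  unfold weighted_integrand, Re_fun, Im_fun, CDn; simpl; ring.
Qed.

Lemma Re_ipH (u1 u2 v1 v2 : R -> C) :
  ex_ipH_real (Re_fun u1) (Re_fun u2) (Re_fun v1) (Re_fun v2) ->
  ex_ipH_real (Im_fun u1) (Im_fun u2) (Im_fun v1) (Im_fun v2) ->
  Re (ipH u1 u2 v1 v2) =
  ipH_real (Re_fun u1) (Re_fun u2) (Re_fun v1) (Re_fun v2)
  + ipH_real (Im_fun u1) (Im_fun u2) (Im_fun v1) (Im_fun v2).
Proof.
  intros [HA [HB HC]] [HA' [HB' HC']].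
  unfold ipH; rewrite !re_plus, !re_scal_l, !re_mult.
  rewrite (Re_CInt_weighted _ _ _ _ HA HA'), (Re_CInt_weighted _ _ _ _ HB HB'),
    (Re_CInt_weighted _ _ _ _ HC HC').
  unfold ipH_real, Re_fun, Im_fun, Cconj, Re, Im; simpl; ring.
Qed.

Definition boundary_form (a b c d e : R) : R :=
  - c ^ 2 - 5 * b ^ 2 + 2 * c * e - e ^ 2 + (- b - a + d) * a + (c + 5 * b - e - 2 * d) * d.

(* -boundary_form a b c d e
     = (c - e - d/2)^2 + (a + b/2 - d/2)^2 + 19/4 (b - 9/19 d)^2 + 33/76 d^2. *)
Lemma boundary_form_nonpos (a b c d e : R) : boundary_form a b c d e <= 0.
Proof.
  unfold boundary_form.
  pose proof (Rle_0_sqr (c - e - d / 2)). pose proof (Rle_0_sqr (a + b / 2 - d / 2)).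
  pose proof (Rle_0_sqr (b - 9 / 19 * d)). pose proof (Rle_0_sqr d).
  unfold Rsqr in *. nra.
Qed.

Section RealForm.

Variables p r : R -> R.
Hypothesis Hp : RCk 3 p.
Hypothesis Hr : RCk 2 r.

Lemma Derive_Lt1_real (t : R) :
  Derive_n (Lt1_real p r) 1 t = - (2 * Derive_n p 1 t) - t * Derive_n p 2 t + Derive_n r 1 t.
Proof. apply is_derive_unique; unfold Lt1_real; auto_derive_RCk; cbn [Derive_n]; ring. Qed.

Lemma Derive2_Lt1_real (t : R) :
  Derive_n (Lt1_real p r) 2 t = - (3 * Derive_n p 2 t) - t * Derive_n p 3 t + Derive_n r 2 t.
Proof.
  change (Derive_n (Lt1_real p r) 2 t) with (Derive (Derive_n (Lt1_real p r) 1) t).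
  rewrite (Derive_ext _ _ t Derive_Lt1_real).
  apply is_derive_unique; auto_derive_RCk; cbn [Derive_n]; ring.
Qed.

Lemma Derive_Lt2_real (t : R) : t <> 0 ->
  Derive_n (Lt2_real p r) 1 t = Derive_n p 3 t + 5 / t * Derive_n p 2 t
    - 5 / t ^ 2 * Derive_n p 1 t - t * Derive_n r 2 t - 3 * Derive_n r 1 t.
Proof.
  intros Ht; apply is_derive_unique; unfold Lt2_real.
  auto_derive_RCk; cbn [Derive_n]; field; exact Ht.
Qed.

Definition integrand_p2 (t : R) : R :=
  (- (3 * Derive_n p 2 t) - t * Derive_n p 3 t + Derive_n r 2 t) * Derive_n p 2 t * t ^ 5.
Definition integrand_p1 (t : R) : R :=
  (- (2 * Derive_n p 1 t) - t * Derive_n p 2 t + Derive_n r 1 t) * Derive_n p 1 t * t ^ 3.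
(* The weight t^5 cancels the 1/t and 1/t^2 of (Lt2_real p r)', so this polynomial
   expression agrees with weighted_integrand 1 5 (Lt2_real p r) r on (0, 1] and is
   continuous at 0, where Rocq's 5 / 0 = 0 makes the original one meaningless. *)
Definition integrand_r1 (t : R) : R :=
  (t ^ 5 * Derive_n p 3 t + 5 * t ^ 4 * Derive_n p 2 t - 5 * t ^ 3 * Derive_n p 1 t
   - 3 * t ^ 5 * Derive_n r 1 t - t ^ 6 * Derive_n r 2 t) * Derive_n r 1 t.

Definition energy_primitive (t : R) : R :=
  - t ^ 6 * Derive_n p 2 t ^ 2 - 5 * t ^ 4 * Derive_n p 1 t ^ 2
  + 2 * t ^ 5 * Derive_n p 2 t * Derive_n r 1 t - t ^ 6 * Derive_n r 1 t ^ 2.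

Lemma continuous_integrands (t : R) :
  continuous integrand_p2 t /\ continuous integrand_p1 t /\ continuous integrand_r1 t.
Proof. unfold integrand_p2, integrand_p1, integrand_r1; repeat split; solve_continuous. Qed.

Lemma weighted_dot_Lt1_2 :
  ex_weighted_dot 2 5 (Lt1_real p r) p /\
  weighted_dot 2 5 (Lt1_real p r) p = RInt integrand_p2 0 1.
Proof.
  apply RInt_ext_continuous.
  - intros t _; unfold weighted_integrand, integrand_p2; rewrite Derive2_Lt1_real; ring.
  - intros t _; apply (continuous_integrands t).
Qed.

Lemma weighted_dot_Lt1_1 :
  ex_weighted_dot 1 3 (Lt1_real p r) p /\
  weighted_dot 1 3 (Lt1_real p r) p = RInt integrand_p1 0 1.
Proof.
  apply RInt_ext_continuous.
  - intros t _; unfold weighted_integrand, integrand_p1; rewrite Derive_Lt1_real; ring.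
  - intros t _; apply (continuous_integrands t).
Qed.

Lemma weighted_dot_Lt2_1 :
  ex_weighted_dot 1 5 (Lt2_real p r) r /\
  weighted_dot 1 5 (Lt2_real p r) r = RInt integrand_r1 0 1.
Proof.
  apply RInt_ext_continuous.
  - intros t Ht; rewrite Rmin_left, Rmax_right in Ht by lra.
    unfold weighted_integrand, integrand_r1; rewrite Derive_Lt2_real by lra; field; lra.
  - intros t _; apply (continuous_integrands t).
Qed.

Lemma is_derive_energy_primitive (t : R) :
  is_derive energy_primitive t (2 * integrand_p2 t + 10 * integrand_p1 t + 2 * integrand_r1 t).
Proof.
  unfold energy_primitive, integrand_p2, integrand_p1, integrand_r1.
  auto_derive_RCk; cbn [Derive_n INR pred]; ring.
Qed.

Lemma RInt_integrands_primitive :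
  2 * RInt integrand_p2 0 1 + 10 * RInt integrand_p1 0 1 + 2 * RInt integrand_r1 0 1
  = energy_primitive 1 - energy_primitive 0.
Proof.
  assert (X2 : ex_RInt integrand_p2 0 1)
    by (apply (ex_RInt_continuous (V := R_CompleteNormedModule)); intros t _;
        apply (continuous_integrands t)).
  assert (X1 : ex_RInt integrand_p1 0 1)
    by (apply (ex_RInt_continuous (V := R_CompleteNormedModule)); intros t _;
        apply (continuous_integrands t)).
  assert (Xr : ex_RInt integrand_r1 0 1)
    by (apply (ex_RInt_continuous (V := R_CompleteNormedModule)); intros t _;
        apply (continuous_integrands t)).
  assert (Hlin :
    is_RInt (fun t => 2 * integrand_p2 t + 10 * integrand_p1 t + 2 * integrand_r1 t) 0 1
    (2 * RInt integrand_p2 0 1 + 10 * RInt integrand_p1 0 1 + 2 * RInt integrand_r1 0 1)).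
  { exact (is_RInt_plus _ _ 0 1 _ _
      (is_RInt_plus _ _ 0 1 _ _ (is_RInt_scal _ 0 1 2 _ (RInt_correct _ 0 1 X2))
                                (is_RInt_scal _ 0 1 10 _ (RInt_correct _ 0 1 X1)))
      (is_RInt_scal _ 0 1 2 _ (RInt_correct _ 0 1 Xr))). }
  assert (Hftc :
    is_RInt (fun t => 2 * integrand_p2 t + 10 * integrand_p1 t + 2 * integrand_r1 t) 0 1
    (energy_primitive 1 - energy_primitive 0)).
  { apply (is_RInt_derive energy_primitive).
    - intros t _; apply is_derive_energy_primitive.
    - intros t _; unfold integrand_p2, integrand_p1, integrand_r1; solve_continuous. }
  rewrite <- (is_RInt_unique _ _ _ _ Hlin); exact (is_RInt_unique _ _ _ _ Hftc).
Qed.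

Lemma ex_ipH_real_Lt : ex_ipH_real (Lt1_real p r) (Lt2_real p r) p r.
Proof.
  split; [|split].
  - apply weighted_dot_Lt1_2.
  - apply weighted_dot_Lt1_1.
  - apply weighted_dot_Lt2_1.
Qed.

Lemma ipH_real_Lt_boundary :
  ipH_real (Lt1_real p r) (Lt2_real p r) p r =
  boundary_form (p 1) (Derive_n p 1 1) (Derive_n p 2 1) (r 1) (Derive_n r 1 1).
Proof.
  unfold ipH_real.
  rewrite (proj2 weighted_dot_Lt1_2), (proj2 weighted_dot_Lt1_1), (proj2 weighted_dot_Lt2_1).
  rewrite RInt_integrands_primitive.
  unfold energy_primitive, boundary_form, Lt1_real, Lt2_real; field.
Qed.

Lemma ipH_real_Lt_nonpos : ipH_real (Lt1_real p r) (Lt2_real p r) p r <= 0.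
Proof. rewrite ipH_real_Lt_boundary; apply boundary_form_nonpos. Qed.

End RealForm.

Theorem mainTheorem7 (u1 u2 : R -> C)
  (Hu1 : radial_Ck_profile 3 u1) (Hu2 : radial_Ck_profile 2 u2) :
  Re (ipH (Lt1 u1 u2) (Lt2 u1 u2) u1 u2) <= 0.
Proof.
  destruct Hu1 as [[Hp Hq] _], Hu2 as [[Hr Hs] _].
  rewrite Re_ipH, Re_Lt1, Re_Lt2, Im_Lt1, Im_Lt2.
  - pose proof (ipH_real_Lt_nonpos (Re_fun u1) (Re_fun u2) Hp Hr).
    pose proof (ipH_real_Lt_nonpos (Im_fun u1) (Im_fun u2) Hq Hs).
    lra.
  - rewrite Re_Lt1, Re_Lt2; exact (ex_ipH_real_Lt _ _ Hp Hr).
  - rewrite Im_Lt1, Im_Lt2; exact (ex_ipH_real_Lt _ _ Hq Hs).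
Qed.
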